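(* Let $k\ge4$ be even and let $G$ be a $k$-uniform hypergraph. Then the number of minimal canonical H-eigenvectors of the signless Laplacian tensor $\mathcal D+\mathcal A$ corresponding to the eigenvalue $0$, counted with $\mathbf x$ and $-\mathbf x$ identified, equals the number of odd-bipartite connected components of $G$ (counted with multiplicity as explained below).
   Context: A $k$-uniform hypergraph $G=(V,E)$ has vertex set $V=[n]$ ($n\ge k$) and nonempty edge set $E$ of $k$-element subsets; $E_i=\{e\in E:i\in e\}$, $d_i=|E_i|$. Connected components are maximal sets of vertices pairwise joined by chains of edges with consecutive edges intersecting; an isolated vertex (singleton) is also a connected component. $\mathcal A$: $a_{i_1\dots i_k}=\frac1{(k-1)!}$ if $\{i_1,\dots,i_k\}\in E$, else $0$; $\mathcal D$ diagonal with $d_{i\dots i}=d_i$; so $((\mathcal D+\mathcal A)\mathbf x^{k-1})_i=d_ix_i^{k-1}+\sum_{e\in E_i}\prod_{j\in e\setminus\{i\}}x_j$. A nonzero $\mathbf x\in\mathbb C^n$ is an eigenvector of $\mathcal T$ for eigenvalue $\lambda$ if $(\mathcal T\mathbf x^{k-1})_i=\lambda x_i^{k-1}$ for all $i$. An H-eigenvector is a real eigenvector. An eigenvector is canonical if $\max_i|x_i|=1$. An eigenvector $\mathbf x$ of eigenvalue $0$ is minimal if there is no eigenvector of eigenvalue $0$ whose support $\{i:y_i\neq0\}$ is strictly contained in that of $\mathbf x$. Counting of odd-bipartite connected components: each singleton component contributes $1$; each connected component $C$ with $|C|\ge2$ contributes the number of unordered partitions $\{S,T\}$ of $C$ with $S,T\neq\emptyset$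 such that $|e\cap S|$ is odd for every edge $e\subseteq C$ (a component with no such partition contributes $0$). The number of odd-bipartite connected components of $G$ is the sum of these contributions. *)

From HB Require Import structures.
From mathcomp Require Import all_boot all_order all_algebra.
Set Implicit Arguments. Unset Strict Implicit. Unset Printing Implicit Defensive.
Import Order.TTheory GRing.Theory Num.Theory.
Local Open Scope ring_scope.

Definition k_uniform (n k : nat) (E : {set {set 'I_n}}) : Prop :=
  (E != set0) /\ (forall e, e \in E -> #|e| = k).

Definition hdeg (n : nat) (E : {set {set 'I_n}}) (i : 'I_n) : nat :=
  #|[set e in E | i \in e]|.

(* ((D + A) x^{k-1})_i = d_i x_i^{k-1} + sum_{e in E_i} prod_{j in e \ i} x_j *)
Definition signless_lap_apply (C : numClosedFieldType) (n k : nat)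
    (E : {set {set 'I_n}}) (x : {ffun 'I_n -> C}) (i : 'I_n) : C :=
  (hdeg E i)%:R * x i ^+ k.-1
  + \sum_(e in E | i \in e) \prod_(j in e :\ i) x j.

Definition sl_eigenvector (C : numClosedFieldType) (n k : nat)
    (E : {set {set 'I_n}}) (lam : C) (x : {ffun 'I_n -> C}) : Prop :=
  x != 0 /\ forall i, signless_lap_apply k E x i = lam * x i ^+ k.-1.

Definition H_eigenvector (C : numClosedFieldType) (n k : nat)
    (E : {set {set 'I_n}}) (lam : C) (x : {ffun 'I_n -> C}) : Prop :=
  sl_eigenvector k E lam x /\ forall i, x i \is Num.real.

Definition canonical_vec (C : numClosedFieldType) (n : nat)
    (x : {ffun 'I_n -> C}) : Prop :=
  (forall i, `|x i| <= 1) /\ exists i, `|x i| = 1.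

Definition supp (C : numClosedFieldType) (n : nat) (x : {ffun 'I_n -> C})
  : {set 'I_n} := [set i | x i != 0].

Definition minimal_zero_eigvec (C : numClosedFieldType) (n k : nat)
    (E : {set {set 'I_n}}) (x : {ffun 'I_n -> C}) : Prop :=
  sl_eigenvector k E 0 x /\
  ~ (exists y : {ffun 'I_n -> C}, sl_eigenvector k E 0 y /\ supp y \proper supp x).

Definition min_canon_H0 (C : numClosedFieldType) (n k : nat)
    (E : {set {set 'I_n}}) (x : {ffun 'I_n -> C}) : Prop :=
  H_eigenvector k E 0 x /\ canonical_vec x /\ minimal_zero_eigvec k E x.

Definition hadj (n : nat) (E : {set {set 'I_n}}) : rel 'I_n :=
  fun i j => [exists e in E, (i \in e) && (j \in e)].

(* connected components (singletons for isolated vertices) *)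
Definition hcomponents (n : nat) (E : {set {set 'I_n}}) : {set {set 'I_n}} :=
  [set [set j | connect (hadj E) i j] | i : 'I_n].

Definition odd_bip_partitions (n : nat) (E : {set {set 'I_n}}) (Cm : {set 'I_n})
  : {set {set {set 'I_n}}} :=
  [set P : {set {set 'I_n}} | [exists S : {set 'I_n},
     [&& P == [set S; Cm :\: S], S \subset Cm, S != set0, Cm :\: S != set0 &
         [forall e in E, (e \subset Cm) ==> odd #|e :&: S|]]]].

Definition num_odd_bip_components (n : nat) (E : {set {set 'I_n}}) : nat :=
  (\sum_(Cm in hcomponents E)
     (if #|Cm| == 1%N then 1%N else #|odd_bip_partitions E Cm|))%N.

From HB Require Import structures.
From mathcomp Require Import all_boot all_order all_algebra.
Import Order.TTheory GRing.Theory Num.Theory.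
Local Open Scope ring_scope.

(* Write L for D + A.  The proof has three parts.
   1. If L y = 0 then |y| is constant on every connected component: at a
      vertex j where |y| is maximal the equation at j reads
        d_j y_j^(k-1) = - sum_(e in E_j) prod_(l in e \ j) y_l,
      so the triangle inequality must be an equality term by term, which
      forces |y_l| = |y_j| on every edge through j; this propagates along
      the component.
   2. Consequently the minimal canonical H-eigenvectors are exactly the sign
      vectors sign_vec K S, equal to (-1)^[l in S] on a component K and 0
      elsewhere, where S is an odd cut of K (every edge inside K meets S in
      an odd number of vertices); the eigen-equation at a vertex of K turns
      into sum_(e in E_j) (1 + (-1)^|e :&: S|) = 0.
   3. Counting: -sign_vec K S = sign_vec K (K :\: S), so choosing among S and
      K :\: S the one avoiding a fixed anchor vertex of K gives one
      representative per pair {x, -x}; anchored odd cuts of K are in bijection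
      with the odd-bipartitions of K, and a singleton component has exactly
      one (the empty cut). *)

Set Implicit Arguments. Unset Strict Implicit.

Lemma norm_sum_eq_bound (R : numDomainType) (I : finType) (P : pred I)
    (F B : I -> R) :
  (forall e, P e -> `|F e| <= B e) ->
  \sum_(e | P e) B e <= `|\sum_(e | P e) F e| ->
  forall e, P e -> `|F e| = B e.
Proof.
move=> le_FB le_sum e Pe; apply/eqP; rewrite eq_sym -subr_eq0; apply/eqP.
have gap_ge0 i : P i -> 0 <= B i - `|F i| by move=> Pi; rewrite subr_ge0 le_FB.
apply: (psumr_eq0P gap_ge0) Pe; apply/le_anti; rewrite sumr_ge0 // andbT.
by rewrite sumrB subr_le0 (le_trans le_sum) ?ler_norm_sum.
Qed.

Lemma norm_prod_eq_bound (R : numDomainType) (I : finType) (A : {set I})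
    (y : I -> R) (m : R) :
  (forall l, l \in A -> `|y l| <= m) -> `|\prod_(l in A) y l| = m ^+ #|A| ->
  forall l, l \in A -> `|y l| = m.
Proof.
move=> le_ym eq_prod l lA; apply/le_anti; rewrite le_ym //=.
have le_rest : `|\prod_(i in A :\ l) y i| <= m ^+ #|A :\ l|.
  rewrite normr_prod -prodr_const; apply: ler_prod => i /setD1P[_ iA].
  by rewrite normr_ge0 le_ym.
have [->|m_neq0] := eqVneq m 0; first exact: normr_ge0.
have m_gt0 : 0 < m by rewrite lt_def m_neq0 (le_trans _ (le_ym l lA)).
have card_A : #|A| = (#|A :\ l|).+1 by rewrite (cardsD1 l A) lA.
rewrite -(ler_pM2r (exprn_gt0 #|A :\ l| m_gt0)) -exprS -card_A.
by rewrite -eq_prod (big_setD1 l lA) normrM ler_wpM2l.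
Qed.

Lemma add1_sign_ge0 (R : numDomainType) m : 0 <= 1 + (-1) ^+ m :> R.
Proof. by rewrite -signr_odd; case: odd; rewrite /= ?expr1 ?subrr // expr0 addr_ge0. Qed.

Lemma add1_sign_eq0 (R : numDomainType) m : (1 + (-1) ^+ m == 0 :> R) = odd m.
Proof.
by rewrite -signr_odd; case: odd; rewrite /= ?expr1 ?subrr ?eqxx // expr0 -mulr2n pnatr_eq0.
Qed.

Section Components.

Variables (n : nat) (E : {set {set 'I_n}}).

Definition hcomp (i : 'I_n) : {set 'I_n} := [set l | connect (hadj E) i l].

Lemma hcomponentsE : hcomponents E = [set hcomp i | i : 'I_n].
Proof. by []. Qed.

Lemma hadj_connect_sym : connect_sym (hadj E).
Proof.
apply: sym_connect_sym => i j.
by apply/existsP/existsP => -[e /and3P[eE ie je]]; exists e; rewrite eE ie je.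
Qed.

Lemma edge_hadj e i j : e \in E -> i \in e -> j \in e -> hadj E i j.
Proof. by move=> eE ie je; apply/existsP; exists e; rewrite eE ie je. Qed.

Lemma hcomp_refl i : i \in hcomp i.
Proof. by rewrite inE connect0. Qed.

Lemma hcomp_connect i l l' : l \in hcomp i -> l' \in hcomp i -> connect (hadj E) l l'.
Proof.
rewrite !inE => il il'; apply: connect_trans il'.
by rewrite hadj_connect_sym.
Qed.

Lemma edge_sub_hcomp i e j : e \in E -> j \in e -> j \in hcomp i -> e \subset hcomp i.
Proof.
move=> eE je; rewrite inE => ij; apply/subsetP => l le; rewrite inE.
exact: connect_trans ij (connect1 (edge_hadj eE je le)).
Qed.

Lemma hcomp_has_edge i : #|hcomp i| != 1%N -> exists2 e, e \in E & e \subset hcomp i.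
Proof.
move=> not_single.
have : (0 < #|hcomp i :\ i|)%N.
  by move: not_single; rewrite (cardsD1 i) hcomp_refl add1n; case: #|_ :\ _|.
case/card_gt0P => l /setD1P[l_neq_i]; rewrite inE => /connectP[[|j p] /=].
  by move=> _ l_eq_i; rewrite l_eq_i eqxx in l_neq_i.
case/andP=> /existsP[e /and3P[eE ie _]] _ _.
by exists e => //; apply: edge_sub_hcomp ie (hcomp_refl i).
Qed.

End Components.

Section ZeroEigenvectors.

Variables (C : numClosedFieldType) (n k : nat) (E : {set {set 'I_n}}).

Lemma sum_edges_at_const (c : C) j : \sum_(e in E | j \in e) c = (hdeg E j)%:R * c.
Proof. by rewrite mulr_natl /hdeg -sumr_const; apply: eq_bigl => e; rewrite inE. Qed.

Lemma zero_eig_lap (y : {ffun 'I_n -> C}) :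
  sl_eigenvector k E 0 y -> forall i, signless_lap_apply k E y i = 0.
Proof. by case=> _ y_eig i; rewrite y_eig mul0r. Qed.

Hypothesis E_unif : k_uniform k E.

(* Local step: if |y| attains at j its maximum over the edges through j, then
   |y| equals that maximum on all these edges (triangle inequality at j). *)
Lemma max_norm_spreads (y : {ffun 'I_n -> C}) j m :
  (forall i, signless_lap_apply k E y i = 0) -> `|y j| = m ->
  (forall e l, e \in E -> j \in e -> l \in e -> `|y l| <= m) ->
  forall e l, e \in E -> j \in e -> l \in e -> `|y l| = m.
Proof.
move=> y_eig y_j le_m e l eE je le.
have [-> //|l_neq_j] := eqVneq l j.
pose F e := \prod_(l in e :\ j) y l.
have card_rest e' : e' \in E -> j \in e' -> #|e' :\ j| = k.-1.
  by move=> e'E je'; rewrite -(E_unif.2 e' e'E) (cardsD1 j e') je' add1n.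
have le_F e' : (e' \in E) && (j \in e') -> `|F e'| <= m ^+ k.-1.
  case/andP=> e'E je'; rewrite normr_prod -(card_rest e' e'E je') -prodr_const.
  by apply: ler_prod => i /setD1P[_ ie']; rewrite normr_ge0 (le_m e').
have eq_F : `|F e| = m ^+ k.-1.
  apply: (norm_sum_eq_bound le_F); last by rewrite eE je.
  have /eqP := y_eig j; rewrite addr_eq0 => /eqP lap_j.
  by rewrite -normrN /F -lap_j normrM normr_nat normrX y_j sum_edges_at_const.
apply: (norm_prod_eq_bound (A := e :\ j)) => [i /setD1P[_ ie]||].
- exact: le_m ie.
- by rewrite card_rest.
- by rewrite !inE l_neq_j.
Qed.

(* Global step: take a vertex j where |y| is maximal on the component; the set
   where |y| reaches the maximum is closed under adjacency, hence is the
   whole component. *)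
Lemma norm_const_on_hcomp (y : {ffun 'I_n -> C}) i l :
  (forall j, signless_lap_apply k E y j = 0) -> l \in hcomp E i -> `|y l| = `|y i|.
Proof.
move=> y_eig il.
case: (@real_arg_maxP _ _ i (mem (hcomp E i)) (fun l => `|y l|) (hcomp_refl E i)
  (fun l _ => normr_real (y l))) => j jK max_j.
set m := `|y j| in max_j.
pose at_max := [pred x | (x \in hcomp E i) ==> (`|y x| == m)].
have closed_max : closed (hadj E) at_max.
  apply: (intro_closed (hadj_connect_sym E)) => x z /existsP[e /and3P[eE xe ze]].
  move=> /implyP max_x; apply/implyP => zK.
  have eK : e \subset hcomp E i := edge_sub_hcomp eE ze zK.
  have xK : x \in hcomp E i := subsetP eK x xe.
  have y_x : `|y x| = m by apply/eqP/max_x.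
  apply/eqP; apply: (max_norm_spreads y_eig y_x _ eE xe ze).
  move=> e' l' e'E xe' l'e'; apply: max_j.
  exact: subsetP (edge_sub_hcomp e'E xe' xK) _ l'e'.
have at_max_K x : x \in hcomp E i -> `|y x| = m.
  move=> xK; have j_max : j \in at_max by rewrite inE eqxx implybT.
  rewrite (closed_connect closed_max (hcomp_connect jK xK)) in j_max.
  exact/eqP/(implyP j_max).
by rewrite !at_max_K ?hcomp_refl.
Qed.

End ZeroEigenvectors.

Section SignVectors.

Variables (C : numClosedFieldType) (n : nat).
Implicit Types (K S e : {set 'I_n}).

Definition sign_vec K S : {ffun 'I_n -> C} :=
  [ffun l => if l \in K then (-1) ^+ (l \in S) else 0].

Lemma sign_vec_in K S l : l \in K -> sign_vec K S l = (-1) ^+ (l \in S).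
Proof. by move=> lK; rewrite ffunE lK. Qed.

Lemma sign_vec_out K S l : l \notin K -> sign_vec K S l = 0.
Proof. by move=> lK; rewrite ffunE (negbTE lK). Qed.

Lemma supp_sign_vec K S : supp (sign_vec K S) = K.
Proof.
apply/setP => l; rewrite inE; have [lK|lK] := boolP (l \in K).
  by rewrite sign_vec_in // signr_eq0.
by rewrite sign_vec_out ?eqxx.
Qed.

Lemma supp_eq0 (x : {ffun 'I_n -> C}) : (supp x == set0) = (x == 0).
Proof.
apply/eqP/eqP => [supp0|->]; last by apply/setP => l; rewrite !inE ffunE eqxx.
apply/ffunP => l; rewrite ffunE; apply/eqP/negbNE/negP => xl.
have : l \in supp x by rewrite inE.
by rewrite supp0 in_set0.
Qed.

Lemma sign_vec_neq0 K S : K != set0 -> sign_vec K S != 0.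
Proof. by rewrite -supp_eq0 supp_sign_vec. Qed.

Lemma sign_vec_real K S l : sign_vec K S l \is Num.real.
Proof. by rewrite ffunE; case: ifP => _; rewrite ?real0 ?realX ?realN ?real1. Qed.

Lemma sign_vec_canonical K S : K != set0 -> canonical_vec (sign_vec K S).
Proof.
case/set0Pn => i iK; split; last by exists i; rewrite sign_vec_in ?normr_sign.
move=> l; have [lK|lK] := boolP (l \in K); last by rewrite sign_vec_out ?normr0.
by rewrite sign_vec_in ?normr_sign.
Qed.

Lemma prod_sign_vec K S e :
  e \subset K -> \prod_(l in e) sign_vec K S l = (-1) ^+ #|e :&: S|.
Proof.
move=> eK; rewrite (bigID (mem S)) /= [X in _ * X]big1 ?mulr1; last first.
  by move=> l /andP[le lS]; rewrite sign_vec_in ?(subsetP eK) // (negbTE lS).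
rewrite -prodr_const; apply: eq_big => [l|l /andP[le lS]]; first by rewrite inE.
by rewrite sign_vec_in ?(subsetP eK) // lS.
Qed.

Lemma sign_vec_inj K S K' S' :
  S \subset K -> S' \subset K' -> sign_vec K S = sign_vec K' S' -> K = K' /\ S = S'.
Proof.
move=> SK S'K' eq_vec.
have eq_K : K = K' by rewrite -(supp_sign_vec K S) -(supp_sign_vec K' S') eq_vec.
split=> //; subst K'; apply/setP => l; have [lK|lK] := boolP (l \in K).
  by apply: (@signr_inj C); rewrite /= -(sign_vec_in S lK) -(sign_vec_in S' lK) eq_vec.
by rewrite (contraNF (subsetP SK l) lK) (contraNF (subsetP S'K' l) lK).
Qed.

Lemma oppr_sign_vec K S : S \subset K -> - sign_vec K S = sign_vec K (K :\: S).
Proof.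
move=> SK; apply/ffunP => l; rewrite !ffunE inE.
by case: (l \in K); rewrite ?oppr0 // andbT signrN.
Qed.

End SignVectors.

Definition odd_cut (n : nat) (E : {set {set 'I_n}}) (K S : {set 'I_n}) : bool :=
  [forall e in E, (e \subset K) ==> odd #|e :&: S|].

Section SignVectorEigen.

Variables (C : numClosedFieldType) (n k : nat) (E : {set {set 'I_n}}).
Hypotheses (k_even : ~~ odd k) (k_ge2 : (2 <= k)%N) (E_unif : k_uniform k E).
Implicit Types (K S e : {set 'I_n}) (x : {ffun 'I_n -> C}).

(* The eigen-equation at a vertex j of a closed set K on which x follows the
   sign pattern of S: multiplying by x_j (so that x_j^k = 1) gives
   x_j (Lx)_j = sum over edges e through j of (1 + (-1)^|e :&: S|). *)
Lemma lap_sign_pattern x K S j :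
  (forall l, l \in K -> x l = sign_vec C K S l) -> j \in K ->
  (forall e, e \in E -> j \in e -> e \subset K) ->
  x j * signless_lap_apply k E x j = \sum_(e in E | j \in e) (1 + (-1) ^+ #|e :&: S|).
Proof.
move=> x_sign jK edges_in.
have xj_pow : x j * x j ^+ k.-1 = 1.
  rewrite -exprS prednK ?(leq_trans _ k_ge2) // x_sign // sign_vec_in //.
  by rewrite -exprM mulnC exprM -signr_odd (negbTE k_even) expr1n.
rewrite big_split /= sum_edges_at_const mulr1 mulrDr mulrCA xj_pow mulr1 mulr_sumr.
congr (_ + _); apply: eq_bigr => e /andP[eE je].
rewrite -(prod_sign_vec _ S (edges_in e eE je)) (big_setD1 j je) /= x_sign //.
congr (_ * _).
by apply: eq_bigr => l /setD1P[_ le]; rewrite x_sign // (subsetP (edges_in e eE je)).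
Qed.

(* The sign vector of an odd cut of a component is annihilated by D + A:
   inside the component every term above vanishes, outside it every product
   meets a zero entry. *)
Lemma sign_vec_lap0 i S j : odd_cut E (hcomp E i) S ->
  signless_lap_apply k E (sign_vec C (hcomp E i) S) j = 0.
Proof.
set K := hcomp E i; move=> /forall_inP cut.
have [jK|jK] := boolP (j \in K).
  have edges_in e : e \in E -> j \in e -> e \subset K.
    by move=> eE je; apply: edge_sub_hcomp eE je jK.
  have terms0 : \sum_(e in E | j \in e) (1 + (-1) ^+ #|e :&: S|) = 0 :> C.
    apply: big1 => e /andP[eE je]; apply/eqP.
    by rewrite add1_sign_eq0 (implyP (cut e eE) (edges_in e eE je)).
  have /eqP := lap_sign_pattern (x := sign_vec C K S) (fun l _ => erefl) jK edges_in.
  by rewrite terms0 mulf_eq0 sign_vec_in // signr_eq0 => /eqP.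
have far e l : e \in E -> j \in e -> l \in e -> l \notin K.
  by move=> eE je le; apply: contra jK => lK; apply: subsetP (edge_sub_hcomp eE le lK) j je.
have k1_gt0 : (0 < k.-1)%N by rewrite -subn1 subn_gt0.
rewrite /signless_lap_apply sign_vec_out // expr0n eqn0Ngt k1_gt0 mulr0 add0r.
apply: big1 => e /andP[eE je].
have /card_gt0P[l l_rest] : (0 < #|e :\ j|)%N.
  by move: (E_unif.2 e eE); rewrite (cardsD1 j e) je add1n => card_e; rewrite -ltnS card_e.
rewrite (big_setD1 l l_rest) /= sign_vec_out ?mul0r //.
by case/setD1P: l_rest => _; apply: far eE je.
Qed.

Lemma sign_vec_eig i S : odd_cut E (hcomp E i) S ->
  sl_eigenvector k E 0 (sign_vec C (hcomp E i) S).
Proof.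
move=> cut; split=> [|j]; last by rewrite mul0r sign_vec_lap0.
by apply: sign_vec_neq0; apply/set0Pn; exists i; apply: hcomp_refl.
Qed.

(* Sign vectors of odd cuts of components are minimal canonical H-eigenvectors;
   minimality holds because a 0-eigenvector vanishing at one vertex of a
   component vanishes on the whole component (Part 1). *)
Lemma sign_vec_min_canon i S : odd_cut E (hcomp E i) S ->
  min_canon_H0 k E (sign_vec C (hcomp E i) S).
Proof.
set K := hcomp E i; move=> cut.
have K_neq0 : K != set0 by apply/set0Pn; exists i; apply: hcomp_refl.
split; first by split=> [|l]; [apply: sign_vec_eig | apply: sign_vec_real].
split; first exact: sign_vec_canonical.
split; first exact: sign_vec_eig.
case=> y [y_eig]; rewrite supp_sign_vec => /properP[sub_y [l lK l_notin_y]].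
have [j jy] : exists j, j \in supp y.
  by apply/set0Pn; rewrite supp_eq0; case: y_eig.
have y0 := zero_eig_lap y_eig; have jK := subsetP sub_y j jy.
move: l_notin_y jy; rewrite !inE negbK -normr_eq0 => /eqP y_l.
rewrite -normr_eq0 (norm_const_on_hcomp E_unif y0 jK).
by rewrite -(norm_const_on_hcomp E_unif y0 lK) y_l eqxx.
Qed.

(* Conversely, a 0-eigenvector following a sign pattern on a component gives an
   odd cut: the nonnegative terms 1 + (-1)^|e :&: S| sum to zero. *)
Lemma odd_cut_of_sign_pattern x i S :
  (forall j, signless_lap_apply k E x j = 0) ->
  (forall l, l \in hcomp E i -> x l = sign_vec C (hcomp E i) S l) ->
  odd_cut E (hcomp E i) S.
Proof.
move=> x0 x_sign; apply/forall_inP => e eE; apply/implyP => eK.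
have /card_gt0P[j je] : (0 < #|e|)%N by rewrite E_unif.2 // (leq_trans _ k_ge2).
have jK := subsetP eK j je.
have edges_in e' : e' \in E -> j \in e' -> e' \subset hcomp E i.
  by move=> e'E je'; apply: edge_sub_hcomp e'E je' jK.
have := lap_sign_pattern x_sign jK edges_in; rewrite x0 mulr0 => /esym sum0.
have term0 : 1 + (-1) ^+ #|e :&: S| = 0 :> C.
  by apply: (psumr_eq0P _ sum0); rewrite ?eE ?je // => e' _; apply: add1_sign_ge0.
by move/eqP: term0; rewrite add1_sign_eq0.
Qed.

(* Every minimal canonical H-eigenvector for 0 is such a sign vector: it has
   modulus 1 on the component of a vertex where it has modulus 1, and it
   vanishes elsewhere by minimality. *)
Lemma min_canon_sign_vec x : min_canon_H0 k E x ->
  exists i S, [/\ S \subset hcomp E i, odd_cut E (hcomp E i) S &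
                  x = sign_vec C (hcomp E i) S].
Proof.
move=> [[x_eig x_real] [[_ [i x_i]] [_ minimal]]].
have x0 := zero_eig_lap x_eig.
set K := hcomp E i; set S := [set l in K | x l < 0].
have norm1 l : l \in K -> `|x l| = 1.
  by move=> lK; rewrite (norm_const_on_hcomp E_unif x0 lK).
have x_sign l : l \in K -> x l = sign_vec C K S l.
  by move=> lK; rewrite sign_vec_in // inE lK /= {1}(realEsign (x_real l)) norm1 // mulr1.
have cut : odd_cut E K S := odd_cut_of_sign_pattern x0 x_sign.
have x_out l : l \notin K -> x l = 0.
  move=> lK; apply/eqP/negbNE/negP => xl; apply: minimal.
  exists (sign_vec C K S); split; first exact: sign_vec_eig.
  rewrite supp_sign_vec; apply/properP; split; last by exists l => //; rewrite inE.
  by apply/subsetP => l' l'K; rewrite inE -normr_eq0 norm1 // oner_eq0.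
exists i, S; split=> //; first by apply/subsetP => l /setIdP[].
apply/ffunP => l; have [lK|lK] := boolP (l \in K); first exact: x_sign.
by rewrite x_out // sign_vec_out.
Qed.

End SignVectorEigen.

(* Part 3: counting.  A cut S of K is normal when it avoids the anchor of K, a
   fixed vertex of K; exactly one of S and K :\: S is normal. *)
Section Cuts.

Variables (n k : nat) (E : {set {set 'I_n}}).
Implicit Types (K S e : {set 'I_n}).

Definition anchored K S : bool :=
  if [pick l in K] is Some a then a \notin S else false.

Definition normal_cuts K : {set {set 'I_n}} :=
  [set S : {set 'I_n} | [&& S \subset K, odd_cut E K S & anchored K S]].

Lemma anchored_compl K S : K != set0 -> anchored K (K :\: S) = ~~ anchored K S.
Proof.
rewrite /anchored; case: pickP => [a aK|K0]; first by rewrite inE aK andbT negbK.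
by case/set0Pn => a; rewrite K0.
Qed.

Lemma anchored_neq0 K S : anchored K S -> K != set0.
Proof. by rewrite /anchored; case: pickP => // a aK _; apply/set0Pn; exists a. Qed.

Lemma odd_cut_neq0 K S e : e \in E -> e \subset K -> odd_cut E K S -> S != set0.
Proof.
move=> eE eK /forall_inP/(_ e eE)/implyP/(_ eK).
by apply: contraTneq => ->; rewrite setI0 cards0.
Qed.

Hypotheses (k_even : ~~ odd k) (k_ge2 : (2 <= k)%N) (E_unif : k_uniform k E).

Lemma odd_cut_compl K S : odd_cut E K S -> odd_cut E K (K :\: S).
Proof.
move=> /forall_inP cut; apply/forall_inP => e eE; apply/implyP => eK.
have -> : e :&: (K :\: S) = e :\: S by rewrite setIDA (setIidPl eK).
rewrite cardsD oddB ?subset_leq_card ?subsetIl // E_unif.2 // (negbTE k_even).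
exact: implyP (cut e eE) eK.
Qed.

Lemma normal_cuts_single K : #|K| = 1%N -> normal_cuts K = [set set0].
Proof.
move=> /eqP/cards1P[a ->]; apply/setP => S; rewrite !inE /anchored.
case: pickP => [b /set1P -> | /(_ a)]; last by rewrite inE eqxx.
apply/and3P/eqP => [[/subsetP S_a _ aS]|->]; last first.
  split; [exact: sub0set | apply/forall_inP => e eE | by rewrite inE].
  apply/implyP => /subset_leq_card; rewrite cards1 E_unif.2 //.
  by move=> k_le1; have := leq_trans k_ge2 k_le1.
apply/setP => l; rewrite inE; apply/negbTE/negP => lS.
by move: (S_a l lS) aS => /set1P <-; rewrite lS.
Qed.

Lemma odd_bip_partitionsE K : (exists2 e, e \in E & e \subset K) ->
  odd_bip_partitions E K = [set [set S; K :\: S] | S in normal_cuts K].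
Proof.
case=> e eE eK.
have compl_compl S : S \subset K -> K :\: (K :\: S) = S.
  by move=> SK; rewrite setDDr setDv set0U; apply/setIidPr.
apply/setP => P; rewrite inE; apply/existsP/imsetP => [[S]|[S]].
  case/and5P => /eqP -> SK S_neq0 _; rewrite -/(odd_cut E K S) => cut.
  have K_neq0 : K != set0.
    by case/set0Pn: S_neq0 => a aS; apply/set0Pn; exists a; apply: subsetP SK a aS.
  have [anch|not_anch] := boolP (anchored K S).
    by exists S => //; rewrite inE SK cut anch.
  exists (K :\: S); last by rewrite compl_compl // setUC.
  by rewrite inE subsetDl odd_cut_compl // anchored_compl // not_anch.
rewrite inE => /and3P[SK cut _] ->; exists S.
by rewrite eqxx SK (odd_cut_neq0 eE eK cut) (odd_cut_neq0 eE eK (odd_cut_compl cut)).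
Qed.

Lemma card_normal_cuts K : (exists2 e, e \in E & e \subset K) ->
  #|normal_cuts K| = #|odd_bip_partitions E K|.
Proof.
move=> has_edge; rewrite odd_bip_partitionsE // card_in_imset // => S S'.
rewrite !inE => /and3P[SK _ anch] /and3P[S'K _ anch'] eq_pair.
have : S \in [set S'; K :\: S'] by rewrite -eq_pair !inE eqxx.
rewrite !inE => /orP[/eqP // | /eqP S_compl].
by move: anch; rewrite S_compl anchored_compl ?anch' // (anchored_neq0 anch').
Qed.

Definition cut_pairs : {set {set 'I_n} * {set 'I_n}} :=
  [set p | (p.1 \in hcomponents E) && (p.2 \in normal_cuts p.1)].

Lemma card_normal_cuts_hcomp i :
  #|normal_cuts (hcomp E i)| =
    if #|hcomp E i| == 1%N then 1%N else #|odd_bip_partitions E (hcomp E i)|.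
Proof.
case: ifP => [/eqP single | /negbT not_single]; first by rewrite normal_cuts_single ?cards1.
exact/card_normal_cuts/hcomp_has_edge.
Qed.

Lemma card_cut_pairs : #|cut_pairs| = num_odd_bip_components E.
Proof.
rewrite /num_odd_bip_components -sum1_card.
rewrite (partition_big (fun p => p.1) (mem (hcomponents E))) /=; last first.
  by move=> p; rewrite inE => /andP[].
apply: eq_bigr => Cm /imsetP[i _ ->]; rewrite -/(hcomp E i) -card_normal_cuts_hcomp.
rewrite -sum1_card (reindex_onto (fun S => (hcomp E i, S)) snd) /=; last first.
  by move=> [K S] /andP[_ /eqP /= <-].
by apply: eq_bigl => S; rewrite inE /= !eqxx !andbT hcomponentsE imset_f.
Qed.

End Cuts.

Section Representatives.

Variables (C : numClosedFieldType) (n : nat) (E : {set {set 'I_n}}).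

Definition min_canon_reps : seq {ffun 'I_n -> C} :=
  [seq sign_vec C p.1 p.2 | p <- enum (cut_pairs E)].

Lemma cut_pairs_sub p : p \in cut_pairs E -> p.2 \subset p.1.
Proof. by rewrite inE => /andP[_]; rewrite inE => /and3P[]. Qed.

Lemma uniq_min_canon_reps : uniq min_canon_reps.
Proof.
rewrite map_inj_in_uniq ?enum_uniq // => -[K S] [K' S']; rewrite !mem_enum.
by move=> /cut_pairs_sub SK /cut_pairs_sub S'K' /(sign_vec_inj SK S'K') [/= -> ->].
Qed.

Lemma mem_min_canon_reps (K S : {set 'I_n}) : S \subset K ->
  (sign_vec C K S \in min_canon_reps) = ((K, S) \in cut_pairs E).
Proof.
move=> SK; apply/mapP/idP => [[[K' S']] | KS]; last by exists (K, S); rewrite ?mem_enum.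
by rewrite mem_enum => KS' /(sign_vec_inj SK (cut_pairs_sub KS')) [/= -> ->].
Qed.

End Representatives.

Unset Implicit Arguments. Set Strict Implicit.

Theorem proposition5p1 (C : numClosedFieldType) (n k : nat)
    (E : {set {set 'I_n}}) :
  ~~ odd k -> (4 <= k)%N -> (k <= n)%N -> k_uniform k E ->
  exists s : seq {ffun 'I_n -> C},
    [/\ uniq s,
        (forall x, x \in s -> min_canon_H0 k E x),
        (forall x, min_canon_H0 k E x -> (x \in s) (+) (- x \in s)) &
        size s = num_odd_bip_components E].
Proof.
move=> k_even k_ge4 _ E_unif; have k_ge2 : (2 <= k)%N by apply: leq_trans k_ge4.
exists (min_canon_reps C E); split.
- exact: uniq_min_canon_reps.
- move=> x /mapP[[K S]]; rewrite mem_enum inE => /andP[/imsetP[i _ ->]].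
  by rewrite inE => /and3P[_ cut _] ->; apply: sign_vec_min_canon.
- move=> x /(min_canon_sign_vec k_even k_ge2 E_unif)[i [S [SK cut ->]]].
  rewrite oppr_sign_vec // !mem_min_canon_reps ?subsetDl //.
  rewrite !inE /= hcomponentsE imset_f //= SK subsetDl cut (odd_cut_compl k_even E_unif cut).
  rewrite anchored_compl; first by case: anchored.
  by apply/set0Pn; exists i; apply: hcomp_refl.
- by rewrite size_map -cardE (card_cut_pairs k_even k_ge2 E_unif).
Qed.
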